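(* Suppose A1–A3 hold and let $\{x_k\}$ be generated by Algorithm 1 with the Metropolis-based choice $$\nu_{k,l}=\sigma\exp\!\Big(-\max\{\theta,\ f(x_k+\alpha_k\beta^l d_k)-f(x_k)\}\,\ln(k+1)\Big)$$ for constants $\sigma>0$, $\theta>1$. Let $\epsilon>0$. If $T$ is a positive integer with $$T\ge 2\max\left\{\sigma\sum_{k=0}^{\infty}\frac{1}{(k+1)^\theta},\ f(x_0)-f_{low}\right\}\kappa_c^{-1}\epsilon^{-2},$$ then $\min_{k=0,\dots,T-1}\|\nabla f(x_k)\|\le\epsilon$.
   Context: Let $(X,\langle\cdot,\cdot\rangle)$ be a real Hilbert space with induced norm $\|\cdot\|$, and $f:X\to\mathbb{R}$ Fréchet differentiable with gradient $\nabla f$. Algorithm 1 (general non-monotone descent algorithm): parameters $x_0\in X$, $\alpha_0>0$, $\beta,\rho\in(0,1)$. For $k=0,1,2,\dots$: choose $d_k\in X$ with $\langle\nabla f(x_k),d_k\rangle<0$; then for $l=0,1,2,\dots$ choose a number $\nu_{k,l}\ge 0$ and test $$f(x_k+\alpha_k\beta^l d_k)\le f(x_k)+\rho\alpha_k\beta^l\langle\nabla f(x_k),d_k\rangle+\nu_{k,l};$$ let $l_k$ be the first $l$ for which this holds, set $\nu_k:=\nu_{k,l_k}$, $x_{k+1}=x_k+\alpha_k\beta^{l_k}d_k$ and $\alpha_{k+1}=\alpha_k\beta^{l_k-1}$. It is assumed the algorithm generates infinite sequences (all $l_k$ finite). Assumptions: A1: $\nabla f$ is Lipschitz continuous with constant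 $L>0$. A2: there is $f_{low}\in\mathbb{R}$ with $f(x)\ge f_{low}$ for all $x\in X$. A3: there are constants $c_1,c_2>0$ with $\langle\nabla f(x_k),d_k\rangle\le -c_1\|\nabla f(x_k)\|^2$ and $\|d_k\|\le c_2\|\nabla f(x_k)\|$ for all $k$. Constant: $\kappa_c=\min\left\{\rho\beta\alpha_0c_1,\ \frac{2\beta\rho(1-\rho)c_1^2}{Lc_2^2}\right\}$. *)

From Stdlib Require Import Reals Lra.
Open Scope R_scope.

Record Hilbert := {
  hcar :> Type;
  vzero : hcar;
  vadd : hcar -> hcar -> hcar;
  vscal : R -> hcar -> hcar;
  inner : hcar -> hcar -> R;
  vadd_assoc : forall x y z, vadd x (vadd y z) = vadd (vadd x y) z;
  vadd_comm : forall x y, vadd x y = vadd y x;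
  vadd_0 : forall x, vadd vzero x = x;
  vadd_opp : forall x, vadd x (vscal (-1) x) = vzero;
  vscal_1 : forall x, vscal 1 x = x;
  vscal_assoc : forall a b x, vscal a (vscal b x) = vscal (a * b) x;
  vscal_distr_v : forall a x y, vscal a (vadd x y) = vadd (vscal a x) (vscal a y);
  vscal_distr_s : forall a b x, vscal (a + b) x = vadd (vscal a x) (vscal b x);
  inner_sym : forall x y, inner x y = inner y x;
  inner_lin : forall a b x y z,
      inner (vadd (vscal a x) (vscal b y)) z = a * inner x z + b * inner y z;
  inner_pos : forall x, 0 <= inner x x;
  inner_def : forall x, inner x x = 0 -> x = vzero;
  hnorm_complete : forall u : nat -> hcar,
      (forall eps, 0 < eps -> exists N, forall m n, (N <= m)%nat -> (N <= n)%nat ->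
          sqrt (inner (vadd (u m) (vscal (-1) (u n))) (vadd (u m) (vscal (-1) (u n)))) < eps) ->
      exists l, forall eps, 0 < eps -> exists N, forall n, (N <= n)%nat ->
          sqrt (inner (vadd (u n) (vscal (-1) l)) (vadd (u n) (vscal (-1) l))) < eps
}.

Arguments vzero {h}.
Arguments vadd {h}.
Arguments vscal {h}.
Arguments inner {h}.

Definition vsub {X : Hilbert} (x y : X) : X := vadd x (vscal (-1) y).
Definition hnorm {X : Hilbert} (x : X) : R := sqrt (inner x x).

Definition frechet_gradient {X : Hilbert} (f : X -> R) (grad : X -> X) : Prop :=
  forall x eps, 0 < eps -> exists delta, 0 < delta /\
    forall h : X, hnorm h < delta ->
      Rabs (f (vadd x h) - f x - inner (grad x) h) <= eps * hnorm h.

Definition nm_test {X : Hilbert} (f : X -> R) (grad : X -> X) (rho : R)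
    (xk dk : X) (step nu : R) : Prop :=
  f (vadd xk (vscal step dk)) <= f xk + rho * step * inner (grad xk) dk + nu.

Definition kappa_c (rho beta alpha0 c1 c2 L : R) : R :=
  Rmin (rho * beta * alpha0 * c1) (2 * beta * rho * (1 - rho) * c1 ^ 2 / (L * c2 ^ 2)).

From Stdlib Require Import Reals ZArith Lra Lia.
Open Scope R_scope.

(* By the descent lemma every trial step of length at most
   B = 2 (1 - rho) c1 / (L c2^2) passes the test, so backtracking never accepts a step
   shorter than beta * min (alpha0, B).  Each iteration therefore decreases f by at least
   kappa_c |grad f (x_k)|^2, up to the Metropolis slack nu_k <= sigma / (k+1)^theta, which
   is summable.  Summing over T iterations bounds kappa_c times the sum of the squared
   gradient norms by f(x0) - f_low + sigma * sum_k (k+1)^-theta, so not all T gradients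
   can exceed eps. *)

Section InnerProductFacts.

Context {X : Hilbert}.
Implicit Types u v w : X.

Lemma vadd_0r u : vadd u vzero = u.
Proof. rewrite (vadd_comm X); apply (vadd_0 X). Qed.

Lemma vscal_0 u : vscal 0 u = vzero.
Proof.
  set (z := vscal 0 u).
  assert (Hzz : vadd z z = z) by (unfold z; rewrite <- (vscal_distr_s X); f_equal; ring).
  rewrite <- (vadd_opp X z); rewrite <- Hzz at 2.
  rewrite <- (vadd_assoc X), (vadd_opp X), vadd_0r; reflexivity.
Qed.

Lemma inner_scal_l a u w : inner (vscal a u) w = a * inner u w.
Proof. pose proof (inner_lin X a 0 u u w) as H; rewrite vscal_0, vadd_0r in H; lra. Qed.

Lemma inner_add_l u v w : inner (vadd u v) w = inner u w + inner v w.
Proof. pose proof (inner_lin X 1 1 u v w) as H; rewrite !(vscal_1 X) in H; lra. Qed.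

Lemma inner_scal_r a u w : inner w (vscal a u) = a * inner w u.
Proof. rewrite (inner_sym X), inner_scal_l, (inner_sym X); reflexivity. Qed.

Lemma inner_add_r u v w : inner w (vadd u v) = inner w u + inner w v.
Proof. rewrite (inner_sym X), inner_add_l, (inner_sym X u), (inner_sym X v); reflexivity. Qed.

Lemma inner_0_r w : inner w vzero = 0.
Proof. rewrite <- (vscal_0 w), inner_scal_r; ring. Qed.

Lemma inner_sub_l u v w : inner (vsub u v) w = inner u w - inner v w.
Proof. unfold vsub; rewrite inner_add_l, inner_scal_l; ring. Qed.

Lemma vsub_vaddKl u w : vsub (vadd u w) u = w.
Proof.
  unfold vsub; rewrite (vadd_comm X u w), <- (vadd_assoc X), (vadd_opp X), vadd_0r.
  reflexivity.
Qed.

Lemma vadd_vscalD u w s h : vadd u (vscal (s + h) w) = vadd (vadd u (vscal s w)) (vscal h w).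
Proof. rewrite (vscal_distr_s X), (vadd_assoc X); reflexivity. Qed.

Lemma hnorm_ge0 u : 0 <= hnorm u.
Proof. apply sqrt_pos. Qed.

Lemma hnorm_scal a u : hnorm (vscal a u) = Rabs a * hnorm u.
Proof.
  unfold hnorm; rewrite inner_scal_l, inner_scal_r, <- Rmult_assoc.
  rewrite sqrt_mult by (nra || apply inner_pos).
  replace (a * a) with (Rsqr a) by reflexivity; rewrite sqrt_Rsqr_abs; reflexivity.
Qed.

Lemma cauchy_schwarz u v : inner u v <= hnorm u * hnorm v.
Proof.
  set (A := inner u u); set (B := inner v v); set (C := inner u v).
  assert (HA : 0 <= A) by apply inner_pos.
  assert (HB : 0 <= B) by apply inner_pos.
  assert (Hquad : forall t, 0 <= A + 2 * t * C + t * t * B).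
  { intro t; pose proof (inner_pos X (vadd u (vscal t v))) as P.
    rewrite inner_add_l, !inner_add_r, !inner_scal_l, !inner_scal_r, (inner_sym X v u) in P.
    unfold A, B, C; nra. }
  assert (HCC : C * C <= A * B).
  { destruct (Req_dec B 0) as [B0 | B0].
    - apply (inner_def X) in B0; unfold C; rewrite B0, inner_0_r; nra.
    - (* the discriminant: evaluate the quadratic at its minimiser t = - C / B *)
      specialize (Hquad (- C / B)).
      replace (A + 2 * (- C / B) * C + - C / B * (- C / B) * B) with ((A * B - C * C) / B)
        in Hquad by (field; lra).
      assert (0 <= (A * B - C * C) / B * B) by (apply Rmult_le_pos; lra).
      replace ((A * B - C * C) / B * B) with (A * B - C * C) in * by (field; lra).
      lra. }
  unfold hnorm; fold A B; rewrite <- sqrt_mult by assumption.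
  destruct (Rle_dec C 0); [pose proof (sqrt_pos (A * B)); lra |].
  rewrite <- (sqrt_square C) by lra; apply sqrt_le_1; nra.
Qed.

End InnerProductFacts.

Definition armijo_step_bound (rho c1 c2 L : R) : R := 2 * (1 - rho) * c1 / (L * c2 ^ 2).

Lemma armijo_step_bound_gt0 rho c1 c2 L :
  rho < 1 -> 0 < c1 -> 0 < c2 -> 0 < L -> 0 < armijo_step_bound rho c1 c2 L.
Proof.
  intros; unfold armijo_step_bound.
  apply Rdiv_lt_0_compat; [nra | apply Rmult_lt_0_compat; [lra | apply pow_lt; lra]].
Qed.

Section Smoothness.

Context {X : Hilbert} (f : X -> R) (grad : X -> X).
Hypothesis Hdiff : frechet_gradient f grad.

Lemma derivable_pt_lim_line (x d : X) s :
  derivable_pt_lim (fun s => f (vadd x (vscal s d))) s (inner (grad (vadd x (vscal s d))) d).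
Proof.
  intros eps Heps.
  set (y := vadd x (vscal s d)); set (N := hnorm d).
  assert (HN : 0 <= N) by apply hnorm_ge0.
  destruct (Hdiff y (eps / (N + 1))) as [delta [Hdelta Hy]].
  { apply Rdiv_lt_0_compat; lra. }
  assert (Hstep : 0 < delta / (N + 1)) by (apply Rdiv_lt_0_compat; lra).
  exists (mkposreal _ Hstep); simpl; intros h Hh0 Hh.
  rewrite vadd_vscalD; fold y.
  assert (Habs : 0 < Rabs h) by (apply Rabs_pos_lt; assumption).
  assert (HhN : Rabs h * N < delta).
  { apply (Rmult_lt_compat_r (N + 1)) in Hh; [| lra].
    unfold Rdiv in Hh; rewrite Rmult_assoc, Rinv_l, Rmult_1_r in Hh by lra; nra. }
  specialize (Hy (vscal h d)); rewrite hnorm_scal, inner_scal_r in Hy; fold N in Hy.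
  specialize (Hy HhN).
  set (E := f (vadd y (vscal h d)) - f y - h * inner (grad y) d) in Hy.
  assert (HE : Rabs E < eps * Rabs h).
  { assert (eps / (N + 1) * (Rabs h * N) < eps * Rabs h); [| lra].
    replace (eps / (N + 1) * (Rabs h * N)) with (eps * Rabs h * (N / (N + 1))) by (field; lra).
    assert (N / (N + 1) < 1) by (apply Rmult_lt_reg_r with (N + 1); [lra |]; field_simplify; lra).
    assert (0 < eps * Rabs h) by nra; nra. }
  replace ((f (vadd y (vscal h d)) - f y) / h - inner (grad y) d) with (E / h)
    by (unfold E; field; assumption).
  unfold Rdiv; rewrite Rabs_mult, Rabs_inv.
  apply (Rmult_lt_reg_r (Rabs h)); [assumption |].
  rewrite Rmult_assoc, Rinv_l by lra; lra.
Qed.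

Variable L : R.
Hypothesis HLip : forall u v : X, hnorm (vsub (grad u) (grad v)) <= L * hnorm (vsub u v).

(* Compare phi(s) = f (x + s d) with the quadratic q(s) = s <grad x, d> + s^2 L |d|^2 / 2:
   by Lipschitz continuity phi' <= q' on [0, t], so the mean value theorem applies to phi - q. *)
Lemma descent_lemma (x d : X) t : 0 < t ->
  f (vadd x (vscal t d)) <= f x + t * inner (grad x) d + L / 2 * t ^ 2 * hnorm d ^ 2.
Proof.
  intro Ht.
  set (g := inner (grad x) d); set (N := hnorm d); set (K := L / 2 * N ^ 2).
  set (q := (mult_real_fct g id + mult_real_fct K (id * id))%F).
  set (psi := ((fun s => f (vadd x (vscal s d))) - q)%F).
  assert (Hpsi : forall s, derivable_pt_lim psi s
            (inner (grad (vadd x (vscal s d))) d - (g * 1 + K * (1 * id s + id s * 1)))).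
  { intro s; apply derivable_pt_lim_minus; [apply derivable_pt_lim_line |].
    apply derivable_pt_lim_plus; apply derivable_pt_lim_scal;
      [apply derivable_pt_lim_id | apply derivable_pt_lim_mult; apply derivable_pt_lim_id]. }
  pose (pr := fun s => exist _ _ (Hpsi s) : derivable_pt psi s).
  destruct (MVT_cor1 psi 0 t pr Ht) as [c [Hc [Hc0 Hct]]].
  unfold derive_pt, pr in Hc; simpl in Hc; unfold id in Hc.
  assert (Hderiv : inner (grad (vadd x (vscal c d))) d <= g + 2 * K * c).
  { pose proof (cauchy_schwarz (vsub (grad (vadd x (vscal c d))) (grad x)) d) as Hcs.
    pose proof (HLip (vadd x (vscal c d)) x) as Hl.
    rewrite inner_sub_l in Hcs; fold g N in Hcs.
    rewrite vsub_vaddKl, hnorm_scal, Rabs_right in Hl by lra; fold N in Hl.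
    assert (0 <= N) by apply hnorm_ge0.
    unfold K; nra. }
  assert (Hmono : psi t <= psi 0) by nra.
  unfold psi, q, minus_fct, plus_fct, mult_real_fct, mult_fct, id in Hmono.
  rewrite vscal_0, vadd_0r in Hmono; unfold K in Hmono; fold g N; lra.
Qed.


Lemma nm_test_small_step (rho c1 c2 : R) (xk dk : X) (s nu : R) :
  0 < rho < 1 -> 0 < L -> 0 < c1 -> 0 < c2 ->
  inner (grad xk) dk <= - c1 * hnorm (grad xk) ^ 2 ->
  hnorm dk <= c2 * hnorm (grad xk) ->
  0 < s <= armijo_step_bound rho c1 c2 L -> 0 <= nu ->
  nm_test f grad rho xk dk s nu.
Proof.
  intros Hrho HL Hc1 Hc2 Hangle Hlen [Hs0 HsB] Hnu; unfold nm_test.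
  pose proof (descent_lemma xk dk s Hs0) as Hdesc.
  set (g := inner (grad xk) dk) in *; set (G := hnorm (grad xk)) in *;
    set (N := hnorm dk) in *.
  assert (0 <= N) by apply hnorm_ge0.
  assert (0 <= G) by apply hnorm_ge0.
  assert (HN2 : N ^ 2 <= c2 ^ 2 * G ^ 2) by nra.
  assert (HsL : s * (L * c2 ^ 2) <= 2 * (1 - rho) * c1).
  { unfold armijo_step_bound in HsB.
    apply Rmult_le_compat_r with (r := L * c2 ^ 2) in HsB; [| nra].
    replace (2 * (1 - rho) * c1 / (L * c2 ^ 2) * (L * c2 ^ 2)) with (2 * (1 - rho) * c1)
      in HsB by (field; split; lra).
    exact HsB. }
  assert (Hquad : L / 2 * s ^ 2 * N ^ 2 <= (1 - rho) * c1 * s * G ^ 2).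
  { apply Rle_trans with (L / 2 * s ^ 2 * (c2 ^ 2 * G ^ 2)).
    - apply Rmult_le_compat_l; [nra | exact HN2].
    - replace (L / 2 * s ^ 2 * (c2 ^ 2 * G ^ 2)) with (s * (L * c2 ^ 2) * (s * G ^ 2 / 2))
        by field.
      apply Rle_trans with (2 * (1 - rho) * c1 * (s * G ^ 2 / 2)); [| lra].
      apply Rmult_le_compat_r; [nra | exact HsL]. }
  assert ((1 - rho) * s * g <= - (1 - rho) * c1 * s * G ^ 2).
  { assert (0 <= (1 - rho) * s) by nra; nra. }
  nra.
Qed.

End Smoothness.

Lemma backtracking_step_ge (P : nat -> R -> Prop) (a B beta : R) (l : nat) :
  0 < a -> 0 < beta < 1 ->
  (forall j s, 0 < s <= B -> P j s) ->
  (forall j, (j < l)%nat -> ~ P j (a * beta ^ j)) ->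
  beta * Rmin a B <= a * beta ^ l.
Proof.
  intros Ha Hbeta Hsmall Hfirst.
  destruct l as [| j].
  - pose proof (Rmin_l a B); simpl; nra.
  - assert (Hrejected : B < a * beta ^ j).
    { destruct (Rlt_le_dec B (a * beta ^ j)) as [Hlt | Hle]; [exact Hlt |].
      exfalso; apply (Hfirst j); [lia |].
      apply Hsmall; split; [apply Rmult_lt_0_compat; [| apply pow_lt]; lra | exact Hle]. }
    pose proof (Rmin_r a B); simpl; nra.
Qed.

Lemma powerRZ_of_nat_pred b n : b <> 0 -> powerRZ b (Z.of_nat n - 1) = b ^ n / b.
Proof.
  intro Hb; replace (Z.of_nat n - 1)%Z with (Z.of_nat n + (-1))%Z by lia.
  rewrite powerRZ_add, <- pow_powerRZ by exact Hb; simpl; field; exact Hb.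
Qed.

Lemma Rmin_mult_l k a b : 0 <= k -> Rmin (k * a) (k * b) = k * Rmin a b.
Proof.
  intro Hk; unfold Rmin.
  destruct (Rle_dec (k * a) (k * b)), (Rle_dec a b); try reflexivity; nra.
Qed.

Lemma kappa_c_eq rho beta alpha0 c1 c2 L :
  0 < rho -> 0 < beta -> 0 < c1 -> 0 < c2 -> 0 < L ->
  kappa_c rho beta alpha0 c1 c2 L
  = rho * beta * c1 * Rmin alpha0 (armijo_step_bound rho c1 c2 L).
Proof.
  intros; unfold kappa_c, armijo_step_bound.
  rewrite <- Rmin_mult_l by (apply Rmult_le_pos; [nra | lra]).
  apply f_equal2; [ring | field; split; lra].
Qed.

Lemma kappa_c_gt0 rho beta alpha0 c1 c2 L :
  0 < rho < 1 -> 0 < beta -> 0 < alpha0 -> 0 < c1 -> 0 < c2 -> 0 < L ->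
  0 < kappa_c rho beta alpha0 c1 c2 L.
Proof.
  intros; rewrite kappa_c_eq by lra.
  apply Rmult_lt_0_compat; [apply Rmult_lt_0_compat; [nra | lra] |].
  apply Rmin_pos; [lra | apply armijo_step_bound_gt0; lra].
Qed.

Section NonmonotoneDescent.

Context {X : Hilbert} (f : X -> R) (grad : X -> X).
Hypothesis Hdiff : frechet_gradient f grad.

Variables (alpha0 beta rho L c1 c2 : R).
Hypotheses (Halpha0 : 0 < alpha0) (Hbeta : 0 < beta < 1) (Hrho : 0 < rho < 1)
  (HL : 0 < L) (Hc1 : 0 < c1) (Hc2 : 0 < c2).
Hypothesis HLip : forall u v : X, hnorm (vsub (grad u) (grad v)) <= L * hnorm (vsub u v).

Variables (x : nat -> X) (alpha : nat -> R) (d : nat -> X) (l : nat -> nat)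
  (nu : nat -> nat -> R).
Hypotheses (Ha0 : alpha 0%nat = alpha0) (Hnu_ge0 : forall k j, 0 <= nu k j)
  (Hl_ok : forall k, nm_test f grad rho (x k) (d k) (alpha k * beta ^ (l k)) (nu k (l k)))
  (Hl_first : forall k j, (j < l k)%nat ->
      ~ nm_test f grad rho (x k) (d k) (alpha k * beta ^ j) (nu k j))
  (Hxs : forall k, x (S k) = vadd (x k) (vscal (alpha k * beta ^ (l k)) (d k)))
  (Has : forall k, alpha (S k) = alpha k * powerRZ beta (Z.of_nat (l k) - 1))
  (HA3a : forall k, inner (grad (x k)) (d k) <= - c1 * (hnorm (grad (x k))) ^ 2)
  (HA3b : forall k, hnorm (d k) <= c2 * hnorm (grad (x k))).

Let B := armijo_step_bound rho c1 c2 L.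

Lemma accepted_step_ge k : 0 < alpha k -> beta * Rmin (alpha k) B <= alpha k * beta ^ l k.
Proof.
  intro Hak; apply (backtracking_step_ge
    (fun j s => nm_test f grad rho (x k) (d k) s (nu k j))); try assumption.
  - intros j s Hs; apply (nm_test_small_step f grad Hdiff L HLip rho c1 c2); auto.
  - apply Hl_first.
Qed.

(* The next initial trial step is the accepted one divided by beta, hence it is at
   least Rmin (alpha k) B. *)
Lemma step_sizes_ge k : Rmin alpha0 B <= alpha k.
Proof.
  assert (HB : 0 < B) by (apply armijo_step_bound_gt0; lra).
  assert (Hm : 0 < Rmin alpha0 B) by (apply Rmin_pos; assumption).
  induction k as [| k IH].
  - rewrite Ha0; apply Rmin_l.
  - pose proof (accepted_step_ge k ltac:(lra)) as Hstep.
    rewrite Has, powerRZ_of_nat_pred by lra.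
    assert (Rmin alpha0 B <= Rmin (alpha k) B) by (apply Rmin_glb; [exact IH | apply Rmin_r]).
    apply (Rmult_le_reg_l beta); [lra |].
    replace (beta * (alpha k * (beta ^ l k / beta))) with (alpha k * beta ^ l k)
      by (field; lra).
    nra.
Qed.

Lemma nonmonotone_decrease k :
  f (x (S k)) <= f (x k) - kappa_c rho beta alpha0 c1 c2 L * hnorm (grad (x k)) ^ 2
                 + nu k (l k).
Proof.
  pose proof (Hl_ok k) as Hok; unfold nm_test in Hok; rewrite <- Hxs in Hok.
  assert (HB : 0 < B) by (apply armijo_step_bound_gt0; lra).
  assert (Hm : 0 < Rmin alpha0 B) by (apply Rmin_pos; assumption).
  pose proof (step_sizes_ge k) as Hak.
  pose proof (accepted_step_ge k ltac:(lra)) as Ht.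
  assert (Rmin alpha0 B <= Rmin (alpha k) B) by (apply Rmin_glb; [exact Hak | apply Rmin_r]).
  rewrite kappa_c_eq by lra; fold B.
  pose proof (HA3a k) as Hangle.
  set (t := alpha k * beta ^ l k) in *; set (G := hnorm (grad (x k))) in *.
  assert (HG : 0 <= G ^ 2) by apply pow2_ge_0.
  assert (Htm : beta * Rmin alpha0 B <= t) by nra.
  assert (0 < rho * t).
  { apply Rmult_lt_0_compat; [lra |].
    assert (0 < beta * Rmin alpha0 B) by (apply Rmult_lt_0_compat; lra); lra. }
  assert (rho * t * inner (grad (x k)) (d k) <= - (rho * c1 * t) * G ^ 2) by nra.
  assert (rho * beta * c1 * Rmin alpha0 B * G ^ 2 <= rho * c1 * t * G ^ 2).
  { apply Rmult_le_compat_r; [exact HG |].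
    replace (rho * beta * c1 * Rmin alpha0 B) with (rho * c1 * (beta * Rmin alpha0 B))
      by ring.
    apply Rmult_le_compat_l; [nra | exact Htm]. }
  lra.
Qed.

End NonmonotoneDescent.

Lemma metropolis_weight_le sigma theta D k : 0 < sigma ->
  sigma * exp (- Rmax theta D * ln (INR k + 1)) <= sigma * / Rpower (INR k + 1) theta.
Proof.
  intro Hsigma; rewrite <- Rpower_Ropp.
  change (exp (- Rmax theta D * ln (INR k + 1))) with (Rpower (INR k + 1) (- Rmax theta D)).
  apply Rmult_le_compat_l; [lra |].
  apply Rle_Rpower; [pose proof (pos_INR k); lra |].
  pose proof (Rmax_l theta D); lra.
Qed.

Lemma sum_telescope_le (F a b : nat -> R) :
  (forall k, F (S k) <= F k - a k + b k) ->
  forall n, sum_f_R0 a n <= F 0%nat - F (S n) + sum_f_R0 b n.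
Proof.
  intros Hstep n; induction n as [| n IH]; simpl.
  - pose proof (Hstep 0%nat); lra.
  - pose proof (Hstep (S n)); lra.
Qed.

Lemma sum_f_R0_exists_le_or_gt (a : nat -> R) e n :
  (exists k, (k <= n)%nat /\ a k <= e) \/ INR (S n) * e < sum_f_R0 a n.
Proof.
  induction n as [| n IH].
  - destruct (Rle_dec (a 0%nat) e) as [Hle | Hgt]; [left; exists 0%nat; auto |].
    right; simpl; lra.
  - destruct IH as [[k [Hk Hak]] | IH]; [left; exists k; split; [lia | exact Hak] |].
    destruct (Rle_dec (a (S n)) e) as [Hle | Hgt]; [left; exists (S n); auto |].
    right; rewrite (S_INR (S n)), tech5; lra.
Qed.

Lemma sum_f_R0_exists_le (a : nat -> R) e T :
  (1 <= T)%nat -> sum_f_R0 a (pred T) <= INR T * e -> exists k, (k < T)%nat /\ a k <= e.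
Proof.
  intros HT Hsum.
  destruct (sum_f_R0_exists_le_or_gt a e (pred T)) as [[k [Hk Hak]] | Hgt].
  - exists k; split; [lia | exact Hak].
  - replace (S (pred T)) with T in Hgt by lia; lra.
Qed.

Lemma exists_small_of_sufficient_decrease (F G b : nat -> R) (kap eps C : R) (T : nat) :
  0 < kap -> 0 < eps -> (1 <= T)%nat -> (forall k, 0 <= G k) ->
  (forall k, F (S k) <= F k - kap * G k ^ 2 + b k) ->
  F 0%nat - F T + sum_f_R0 b (pred T) <= C -> C <= INR T * (kap * eps ^ 2) ->
  exists k, (k < T)%nat /\ G k <= eps.
Proof.
  intros Hkap Heps HT HG Hdec Hbudget HC.
  pose proof (sum_telescope_le F _ _ Hdec (pred T)) as Hsum.
  replace (S (pred T)) with T in Hsum by lia.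
  destruct (sum_f_R0_exists_le (fun k => kap * G k ^ 2) (kap * eps ^ 2) T HT)
    as [k [Hk Hsmall]]; [lra |].
  exists k; split; [exact Hk |].
  apply Rmult_le_reg_l in Hsmall; [| exact Hkap].
  pose proof (HG k); nra.
Qed.

Theorem theorem5
  (X : Hilbert) (f : X -> R) (grad : X -> X)
  (Hdiff : frechet_gradient f grad)
  (x0 : X) (alpha0 beta rho : R)
  (Halpha0 : 0 < alpha0) (Hbeta : 0 < beta < 1) (Hrho : 0 < rho < 1)
  (sigma theta : R) (Hsigma : 0 < sigma) (Htheta : 1 < theta)
  (x : nat -> X) (alpha : nat -> R) (d : nat -> X) (l : nat -> nat)
  (nu : nat -> nat -> R)
  (Hx0 : x 0%nat = x0) (Ha0 : alpha 0%nat = alpha0)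
  (Hdesc : forall k, inner (grad (x k)) (d k) < 0)
  (Hnu : forall k j, nu k j =
      sigma * exp (- (Rmax theta (f (vadd (x k) (vscal (alpha k * beta ^ j) (d k))) - f (x k)))
                   * ln (INR k + 1)))
  (Hl_ok : forall k, nm_test f grad rho (x k) (d k) (alpha k * beta ^ (l k)) (nu k (l k)))
  (Hl_first : forall k j, (j < l k)%nat ->
      ~ nm_test f grad rho (x k) (d k) (alpha k * beta ^ j) (nu k j))
  (Hxs : forall k, x (S k) = vadd (x k) (vscal (alpha k * beta ^ (l k)) (d k)))
  (Has : forall k, alpha (S k) = alpha k * powerRZ beta (Z.of_nat (l k) - 1))
  (L : R) (HL : 0 < L)
  (HLip : forall u v : X, hnorm (vsub (grad u) (grad v)) <= L * hnorm (vsub u v))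
  (flow : R) (Hflow : forall u : X, flow <= f u)
  (c1 c2 : R) (Hc1 : 0 < c1) (Hc2 : 0 < c2)
  (HA3a : forall k, inner (grad (x k)) (d k) <= - c1 * (hnorm (grad (x k))) ^ 2)
  (HA3b : forall k, hnorm (d k) <= c2 * hnorm (grad (x k)))
  (Ssum : R)
  (HSsum : Un_cv (fun n => sum_f_R0 (fun k => / Rpower (INR k + 1) theta) n) Ssum)
  (eps : R) (Heps : 0 < eps)
  (T : nat) (HT : (1 <= T)%nat)
  (HTbound : INR T >= 2 * Rmax (sigma * Ssum) (f x0 - flow)
                        * / kappa_c rho beta alpha0 c1 c2 L * / eps ^ 2) :
  exists k, (k < T)%nat /\ hnorm (grad (x k)) <= eps.
Proof.
  set (kap := kappa_c rho beta alpha0 c1 c2 L) in HTbound |- *.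
  set (M := Rmax (sigma * Ssum) (f x0 - flow)) in HTbound.
  assert (Hkap : 0 < kap) by (apply kappa_c_gt0; lra).
  assert (Hnu_ge0 : forall k j, 0 <= nu k j).
  { intros; rewrite Hnu; apply Rlt_le, Rmult_lt_0_compat; [lra | apply exp_pos]. }
  set (w := fun k : nat => / Rpower (INR k + 1) theta).
  apply (exists_small_of_sufficient_decrease (fun k => f (x k)) (fun k => hnorm (grad (x k)))
           (fun k => sigma * w k) kap eps (2 * M) T); try assumption.
  - intro k; apply hnorm_ge0.
  - intro k; pose proof (nonmonotone_decrease f grad Hdiff alpha0 beta rho L c1 c2 Halpha0
      Hbeta Hrho HL Hc1 Hc2 HLip x alpha d l nu Ha0 Hnu_ge0 Hl_ok Hl_first Hxs Has HA3a HA3b k)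
      as Hk.
    rewrite Hnu in Hk; pose proof (metropolis_weight_le sigma theta
      (f (vadd (x k) (vscal (alpha k * beta ^ l k) (d k))) - f (x k)) k Hsigma).
    unfold w; fold kap in Hk; lra.
  - assert (sum_f_R0 (fun k => sigma * w k) (pred T) <= sigma * Ssum).
    { rewrite (sum_eq _ (fun k => w k * sigma)) by (intros; ring); rewrite <- scal_sum.
      apply Rmult_le_compat_l; [lra | apply sum_incr; [exact HSsum |]].
      intro k; apply Rlt_le, Rinv_0_lt_compat, exp_pos. }
    pose proof (Hflow (x T)); rewrite Hx0.
    pose proof (Rmax_l (sigma * Ssum) (f x0 - flow)) as HM1.
    pose proof (Rmax_r (sigma * Ssum) (f x0 - flow)) as HM2; fold M in HM1, HM2; lra.
  - assert (0 < kap * eps ^ 2) by (apply Rmult_lt_0_compat; [| apply pow_lt]; lra).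
    replace (2 * M) with (2 * M * / kap * / eps ^ 2 * (kap * eps ^ 2)) by (field; split; lra).
    apply Rmult_le_compat_r; lra.
Qed.
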